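(* Let $\lambda\in\{1,2\}$ and let $S:\mathbb A^{(\lambda)}_{\rm triv}(\mathbb D^2)\to\mathbb A^{(\lambda)}_{\rm sign}(\mathbb D^2)$ be defined by $Sf=J_{\boldsymbol s}f$, where $J_{\boldsymbol s}(z_1,z_2)=z_1-z_2$. Then $S$ does not have a bounded inverse.
   Context: $\mathbb A^{(2)}(\mathbb D^2)$ is the Bergman space of $\mathbb D^2$ (holomorphic functions with reproducing kernel $\prod_{i=1}^2(1-z_i\bar w_i)^{-2}$, in which $\|z_1^{a}z_2^{b}\|^2=\frac{a!\,b!}{(2)_a(2)_b}$), and $\mathbb A^{(1)}(\mathbb D^2)=H^2(\mathbb D^2)$ is the Hardy space (kernel $\prod_i(1-z_i\bar w_i)^{-1}$). $\mathbb A^{(\lambda)}_{\rm triv}(\mathbb D^2)$ is the subspace of symmetric functions $f(z_1,z_2)=f(z_2,z_1)$, and $\mathbb A^{(\lambda)}_{\rm sign}(\mathbb D^2)$ the subspace of antisymmetric functions $f(z_1,z_2)=-f(z_2,z_1)$. $J_{\boldsymbol s}$ is the Jacobian determinant of the symmetrization map $(z_1+z_2,z_1z_2)$. *)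

From HB Require Import structures.
From mathcomp Require Import all_boot all_order all_algebra.
From mathcomp Require Import all_classical all_reals all_analysis.
From mathcomp Require Import complex.
Set Implicit Arguments. Unset Strict Implicit. Unset Printing Implicit Defensive.
Import Order.TTheory GRing.Theory Num.Theory.
Local Open Scope ring_scope.
Local Open Scope classical_set_scope.

Fixpoint rising (x n : nat) : nat :=
  match n with 0 => 1%N | n'.+1 => (rising x n' * (x + n'))%N end.

Section Spaces.
Variable R : realType.
Local Notation C := R[i].

(* A holomorphic function on D^2 is encoded by its Taylor coefficients:
   f(z1,z2) = sum_{a,b} c a b * z1^a * z2^b. *)
Definition coef2 := nat -> nat -> C.

(* ||z1^a z2^b||^2 in A^(lam)(D^2) = a! b! / ((lam)_a (lam)_b) *)
Definition mono_wt (lam a b : nat) : R :=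
  (a`! * b`!)%:R / (rising lam a * rising lam b)%:R.

Definition sqnorm (lam : nat) (c : coef2) : \bar R :=
  \esum_(p in [set: nat * nat])
    (((ComplexField.Normc.normc (c p.1 p.2)) ^+ 2 * mono_wt lam p.1 p.2)%:E).

Definition Aspace (lam : nat) : set coef2 := [set c | (sqnorm lam c < +oo)%E].

Definition Atriv (lam : nat) : set coef2 :=
  [set c | c \in Aspace lam /\ forall a b, c a b = c b a].
Definition Asign (lam : nat) : set coef2 :=
  [set c | c \in Aspace lam /\ forall a b, c a b = - c b a].

(* multiplication by J_s(z1,z2) = z1 - z2 on coefficients *)
Definition mulJ (c : coef2) : coef2 := fun a b =>
  (if a is a'.+1 then c a' b else 0) - (if b is b'.+1 then c a b' else 0).

Definition bounded_inverse (lam : nat) (T : coef2 -> coef2) : Prop :=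
  (forall g, Asign lam g -> Atriv lam (T g)) /\
      (forall g h, Asign lam g -> Asign lam h ->
         T (fun a b => g a b + h a b) = (fun a b => T g a b + T h a b)) /\
      (forall (k : C) g, Asign lam g -> T (fun a b => k * g a b) = (fun a b => k * T g a b)) /\
      (exists M : R, forall g, Asign lam g -> (sqnorm lam (T g) <= (M ^+ 2)%:E * sqnorm lam g)%E) /\
      (forall f, Atriv lam f -> T (mulJ f) = f) /\
      (forall g, Asign lam g -> mulJ (T g) = g).

End Spaces.

From HB Require Import structures.
From mathcomp Require Import all_boot all_order all_algebra.
From mathcomp Require Import all_classical all_reals all_analysis.
From mathcomp Require Import complex.
From mathcomp Require Import lra.
Set Implicit Arguments. Unset Strict Implicit. Unset Printing Implicit Defensive.
Import Order.TTheory GRing.Theory Num.Theory.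
Local Open Scope ring_scope.
Local Open Scope classical_set_scope.

(** A bounded inverse of multiplication by z1 - z2 would give
    ||f|| <= M ||(z1 - z2) f|| for every f.  Test this on the complete
    homogeneous polynomial h_n = sum_(a+b=n) z1^a z2^b, for which
    (z1 - z2) h_n = z1^(n+1) - z2^(n+1).  In the Hardy space (lam = 1) and in
    the Bergman space (lam = 2) the weights satisfy
    ||z1^i z2^(n-i)||^2 >= ||z1^(n+1)||^2 / (i+1), so
    ||h_n||^2 / ||z1^(n+1) - z2^(n+1)||^2 is at least half the harmonic sum
    1 + 1/2 + ... + 1/(n+1), which is unbounded. *)

Lemma esum_seq_support (R : realType) (T : choiceType) (a : T -> \bar R)
    (s : seq T) :
  uniq s -> (forall i, (0 <= a i)%E) -> (forall i, i \notin s -> a i = 0%E) ->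
  \esum_(i in [set: T]) a i = \sum_(i <- s) a i.
Proof.
move=> s_uniq a_ge0 a_out.
rewrite fsbig_seq // -esum_fset ?finite_seq // (esum_mkcond [set` s]).
apply: eq_esum => i _; case: ifPn => // i_notin_s.
by rewrite a_out //; apply: contra i_notin_s; rewrite inE.
Qed.

Lemma harmonic_series_unbounded (R : realType) (K : R) :
  exists n, K < series harmonic n.+1.
Proof.
have harmonic_nd : nondecreasing_seq (series (@harmonic R)).
  by apply: nondecreasing_series => k _ _; exact: harmonic_ge0.
have /cvgryPgt/(_ K)[N _ KN] :=
  nondecreasing_dvgn_lt harmonic_nd (@dvg_harmonic R).
by exists N; apply: KN; rewrite /= leqnSn.
Qed.

Section Coefficients.
Variable R : realType.
Local Notation C := R[i].
Local Notation normc := (@ComplexField.Normc.normc R).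

Lemma mulJ_inj : injective (@mulJ R).
Proof.
move=> c d eq_cd; have e a b : mulJ c a b = mulJ d a b by rewrite eq_cd.
suff eq_ab a b : c a b = d a b by apply/funext => a; apply/funext => b.
elim: a b => [|a IHa] b.
  by have := e 0%N b.+1; rewrite /mulJ !sub0r => /oppr_inj.
by have := e a.+1 b.+1; rewrite /mulJ IHa => /addrI /oppr_inj.
Qed.

Lemma bounded_inverse_sqnorm_le lam (T : coef2 R -> coef2 R) :
  bounded_inverse lam T -> exists M : R,
  forall f, Asign lam (mulJ f) ->
    (sqnorm lam f <= (M ^+ 2)%:E * sqnorm lam (mulJ f))%E.
Proof.
move=> [_ [_ [_ [[M T_bounded] [_ T_rinv]]]]]; exists M => f Jf_sign.
have TJf : T (mulJ f) = f by apply: mulJ_inj; rewrite T_rinv.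
by rewrite -{1}TJf T_bounded.
Qed.

Lemma normcN (x : C) : normc (- x) = normc x.
Proof. by case: x => a b; rewrite /ComplexField.Normc.normc /= !sqrrN. Qed.

Lemma mono_wtC lam a b : mono_wt R lam a b = mono_wt R lam b a.
Proof. by rewrite /mono_wt mulnC [(rising _ a * _)%N]mulnC. Qed.

Lemma mono_wt_ge0 lam a b : 0 <= mono_wt R lam a b.
Proof. by rewrite /mono_wt divr_ge0. Qed.

Lemma rising_gt0 x n : (0 < x)%N -> (0 < rising x n)%N.
Proof. by move=> x_gt0; elim: n => //= n IHn; rewrite muln_gt0 IHn addn_gt0 x_gt0. Qed.

Lemma mono_wt_gt0 lam a b : (0 < lam)%N -> 0 < mono_wt R lam a b.
Proof.
by move=> lam_gt0; rewrite divr_gt0 // ltr0n muln_gt0 ?fact_gt0 ?rising_gt0.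
Qed.

Lemma rising1 n : rising 1 n = n`!.
Proof. by elim: n => //= n ->; rewrite factS mulnC add1n. Qed.

Lemma rising2 n : rising 2 n = n.+1`!.
Proof. by elim: n => //= n ->; rewrite [in RHS]factS mulnC add2n. Qed.

Lemma mono_wt1 a b : mono_wt R 1 a b = 1.
Proof. by rewrite /mono_wt !rising1 divff // pnatr_eq0 muln_eq0 !gtn_eqF ?fact_gt0. Qed.

Lemma mono_wt2 a b : mono_wt R 2 a b = ((a.+1 * b.+1)%:R)^-1.
Proof.
rewrite /mono_wt !rising2 !factS mulnACA [X in _ / X]natrM invfM mulrCA.
by rewrite divff ?mulr1 // pnatr_eq0 muln_eq0 !gtn_eqF ?fact_gt0.
Qed.

Lemma mono_wt_antidiagonal_ge lam n i : (lam = 1 \/ lam = 2)%N -> (i <= n)%N ->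
  mono_wt R lam n.+1 0 * harmonic i <= mono_wt R lam i (n - i).
Proof.
move=> [->|->] le_in /=; first by rewrite !mono_wt1 mul1r invf_le1 // ler1n.
rewrite !mono_wt2 -invfM -natrM lef_pV2 ?posrE ?ltr0n ?muln_gt0 // ler_nat.
rewrite muln1 [X in (_ <= X)%N]mulnC leq_mul2l ltnS.
by rewrite (leq_trans (leq_subr _ _)) ?orbT.
Qed.

Lemma sqnorm_seq_support lam (c : coef2 R) (s : seq (nat * nat)) :
  uniq s -> (forall a b, (a, b) \notin s -> c a b = 0) ->
  sqnorm lam c = (\sum_(p <- s) normc (c p.1 p.2) ^+ 2 * mono_wt R lam p.1 p.2)%:E.
Proof.
move=> s_uniq c_out; rewrite /sqnorm -sumEFin (esum_seq_support s_uniq) //.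
  by move=> p; rewrite lee_fin mulr_ge0 ?sqr_ge0 ?mono_wt_ge0.
move=> [a b] p_out.
by rewrite /= c_out // ComplexField.Normc.normc0 expr0n mul0r.
Qed.

Definition complete_hom (n : nat) : coef2 R := fun a b => ((a + b)%N == n)%:R.

Definition pow_diff (n : nat) : coef2 R := fun a b =>
  ((a == n.+1) && (b == 0%N))%:R - ((a == 0%N) && (b == n.+1))%:R.

Lemma mulJ_complete_hom n : mulJ (complete_hom n) = pow_diff n.
Proof.
apply/funext => a; apply/funext => b; rewrite /mulJ /complete_hom /pow_diff.
case: a => [|a]; case: b => [|b] //=; rewrite ?andbT ?addn0 ?eqSS ?subrr //.
by rewrite addnS addSn subrr -[b.+1 == 0%N]/false andbF subrr.
Qed.

Lemma sqnorm_pow_diff lam n :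
  sqnorm lam (pow_diff n) = (mono_wt R lam n.+1 0 *+ 2)%:E.
Proof.
have [at_n1_0 at_0_n1] : pow_diff n n.+1 0 = 1 /\ pow_diff n 0 n.+1 = -1.
  by rewrite /pow_diff !eqxx /= subr0 sub0r.
rewrite (@sqnorm_seq_support _ _ [:: (n.+1, 0%N); (0%N, n.+1)]) => //= [|a b].
  rewrite !big_cons big_nil /= at_n1_0 at_0_n1 normcN ComplexField.Normc.normc1.
  by rewrite expr1n !mul1r addr0 (mono_wtC lam 0) mulr2n.
rewrite !inE negb_or !xpair_eqE /pow_diff.
by move=> /andP[/negbTE -> /negbTE ->]; rewrite subrr.
Qed.

Lemma pow_diff_sign lam n : Asign lam (pow_diff n).
Proof.
split=> [|a b]; first by rewrite inE /Aspace /= sqnorm_pow_diff ltry.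
by rewrite /pow_diff opprB (andbC (a == _)) (andbC (a == 0%N)).
Qed.

Lemma sqnorm_complete_hom lam n :
  sqnorm lam (complete_hom n) = (\sum_(0 <= i < n.+1) mono_wt R lam i (n - i))%:E.
Proof.
rewrite (@sqnorm_seq_support _ _ [seq (i, (n - i)%N) | i <- index_iota 0 n.+1]).
- rewrite big_map; congr (_%:E); apply: eq_big_nat => i /andP[_ lt_in].
  have le_in : (i <= n)%N by rewrite -ltnS.
  rewrite /complete_hom [_.1]/= [_.2]/= subnKC // eqxx.
  by rewrite mulr1n ComplexField.Normc.normc1 expr1n mul1r.
- by rewrite map_inj_uniq ?iota_uniq // => i j [].
move=> a b; rewrite /complete_hom; case: eqP => // ab_n /negP[].
apply/mapP; exists a; first by rewrite mem_index_iota ltnS -ab_n leq_addr.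
by rewrite -ab_n addKn.
Qed.

Lemma sqnorm_complete_hom_ge lam n : (lam = 1 \/ lam = 2)%N ->
  ((mono_wt R lam n.+1 0 * series harmonic n.+1)%:E <= sqnorm lam (complete_hom n))%E.
Proof.
move=> hlam; rewrite sqnorm_complete_hom lee_fin /series /= mulr_sumr.
apply: ler_sum_nat => i /andP[_ lt_in].
by apply: mono_wt_antidiagonal_ge hlam _; rewrite -ltnS.
Qed.

End Coefficients.

Theorem proposition4p21 (R : realType) (lam : nat) (hlam : lam = 1%N \/ lam = 2%N) :
  ~ exists T : coef2 R -> coef2 R, bounded_inverse lam T.
Proof.
move=> [T /bounded_inverse_sqnorm_le [M le_sqnorm]].
have [n lt_harmonic] := harmonic_series_unbounded (2 * M ^+ 2).
have w_gt0 : 0 < mono_wt R lam n.+1 0 by apply: mono_wt_gt0; case: hlam => ->.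
have := le_sqnorm (complete_hom R n).
rewrite mulJ_complete_hom => /(_ (pow_diff_sign R lam n)).
move/(le_trans (sqnorm_complete_hom_ge R n hlam)).
rewrite sqnorm_pow_diff -EFinM lee_fin mulr2n.
nra.
Qed.
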